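(* Let $\mathcal{L}=\langle \mathbb{M},\mathbb{E},\mathbb{P},\ell\rangle$ be a proposition conserving model lattice, let $F$ be a finite set of plans (foils), and let $\mathcal{M}_H,\mathcal{M}_i\in\mathbb{M}$ with $\mathcal{M}_H\sqsubseteq\mathcal{M}_i$. If $E\subseteq\mathbb{P}$ is an explanation for $\mathcal{M}_i$ and $F$, then $E$ is also an explanation for $\mathcal{M}_H$ and $F$.
   Context: A planning model is $\mathcal{M}=\langle P,S,A,I,G\rangle$: $P$ a finite set of propositions, $S$ a set of states with each $s\in S$ identified with a subset $s\subseteq P$, $A$ a set of actions, $I\in S$ the initial state, $G\subseteq P$ the goal. Each action $a$ has a precondition set $\mathrm{prec}_a$ and add/delete effects $e_a^+,e_a^-$; $a(s)=(s\cup e_a^+)\setminus e_a^-$ if $\mathrm{prec}_a\subseteq s$, and $a(s)=s$ otherwise. A plan $\pi=\langle a_1,\dots,a_n\rangle$ is valid in $\mathcal{M}$, written $\pi(I)\models_{\mathcal{M}}G$, if $\pi(I)\supseteq G$. The model induces a transition system whose nodes are states and whose edges $s_1\xrightarrow{a}s_2$ are the valid transitions. For $\Lambda\subseteq P$, $f_\Lambda(s)=s\setminus\Lambda$ and $[S]_{f_\Lambda}=\{f_\Lambda(s):s\in S\}$. A model $\mathcal{M}'=\langle P',S',A',I',G'\rangle$ is an abstraction of $\mathcal{M}$ w.r.t. $\Lambda$, written $\mathcal{M}'=[\mathcal{M}]_{f_\Lambda}$, if $P'=P\setminus\Lambda$, $S'=[S]_{f_\Lambda}$, $I'=f_\Lambda(I)$,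 $G'=f_\Lambda(G)$, and for every transition $s_1\xrightarrow{a}s_2$ of $\mathcal{M}$ there is a transition $(s_1\setminus\Lambda)\xrightarrow{a}(s_2\setminus\Lambda)$ of $\mathcal{M}'$ (abstract models may have non-deterministic effects). Write $\mathcal{M}\sqsubseteq\mathcal{M}'$ if $\mathcal{M}'=[\mathcal{M}]_{f_\Lambda}$ for some $\Lambda$. Abstraction functions are assumed commutative and idempotent. A model lattice for $\mathcal{M}^\#$ is $\mathcal{L}=\langle\mathbb{M},\mathbb{E},\mathbb{P},\ell\rangle$ with $\mathcal{M}^\#\in\mathbb{M}$, $\mathcal{M}^\#\sqsubseteq\mathcal{M}'$ for all $\mathcal{M}'\in\mathbb{M}$, and each edge $(\mathcal{M}_i,\mathcal{M}_j)\in\mathbb{E}$ has a label $\ell(\mathcal{M}_i,\mathcal{M}_j)=p\in\mathbb{P}$ with $[\mathcal{M}_i]_{f_p}=\mathcal{M}_j$. The concretization $\gamma_p(\mathcal{M})$ is the $\mathcal{M}'$ with $(\mathcal{M}',\mathcal{M})\in\mathbb{E}$ and $\ell(\mathcal{M}',\mathcal{M})=p$; for $E\subseteq\mathbb{P}$, $\gamma_E(\mathcal{M})$ is the result of applying the concretizations for all $p\in E$. The lattice is proposition conserving if for every $\mathcal{M}\in\mathbb{M}$ and every $p\in\mathbb{P}$ not among the propositions of $\mathcal{M}$ there is $\mathcal{M}'\in\mathbb{M}$ with $(\mathcal{M}',\mathcal{M})\in\mathbb{E}$ and label $p$. For a model $\mathcal{M}_H\in\mathbb{M}$ and a set of plans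 $F$, a set $E\subseteq\mathbb{P}$ is an explanation if for all $\pi\in F$, $\pi$ is not valid in $\gamma_E(\mathcal{M}_H)$, i.e. $\pi(I_{\gamma_E(\mathcal{M}_H)})\not\models_{\gamma_E(\mathcal{M}_H)}G_{\gamma_E(\mathcal{M}_H)}$. *)

From mathcomp Require Import all_boot.
From Stdlib Require Import ClassicalEpsilon.

Set Implicit Arguments.
Unset Strict Implicit.
Unset Printing Implicit Defensive.

Section Models.
Variables (T : finType) (A : Type).
(* T : the (finite) universe of propositions; A : the actions.
   States are identified with subsets of propositions. *)

Record model := Model {
  mP : {set T};
  mS : {set {set T}};
  mtrans : {set T} -> A -> {set T} -> Prop;
  mI : {set T};
  mG : {set T}
}.

Definition strips_apply (prec eadd edel : A -> {set T}) (a : A) (s : {set T})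
  : {set T} :=
  if prec a \subset s then (s :|: eadd a) :\: edel a else s.

Definition strips_model (M : model) : Prop :=
  exists prec eadd edel : A -> {set T},
    [/\ (forall s, s \in mS M -> s \subset mP M),
        mI M \in mS M,
        mG M \subset mP M,
        (forall s a, s \in mS M -> strips_apply prec eadd edel a s \in mS M) &
        (forall s a s', mtrans M s a s' <->
                        (s \in mS M /\ s' = strips_apply prec eadd edel a s))].

Inductive reach (M : model) : {set T} -> seq A -> {set T} -> Prop :=
| reach_nil s : reach M s [::] s
| reach_cons s a s' pi t :
    mtrans M s a s' -> reach M s' pi t -> reach M s (a :: pi) t.

Definition valid (M : model) (pi : seq A) : Prop :=
  exists t, reach M (mI M) pi t /\ mG M \subset t.

Definition absM (Lam : {set T}) (M : model) : model := {|
  mP := mP M :\: Lam;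
  mS := [set s :\: Lam | s in mS M];
  mtrans := fun t1 a t2 => exists s1 s2,
      [/\ mtrans M s1 a s2, t1 = s1 :\: Lam & t2 = s2 :\: Lam];
  mI := mI M :\: Lam;
  mG := mG M :\: Lam |}.

Definition abstracts (M M' : model) : Prop := exists Lam, M' = absM Lam M.

Record lattice := Lattice {
  LM : model -> Prop;
  LE : model -> model -> Prop;
  LP : {set T};
  Llab : model -> model -> T
}.

Definition is_lattice (L : lattice) (Msharp : model) : Prop :=
  [/\ LM L Msharp,
      (forall M, LM L M -> abstracts Msharp M) &
      (forall Mi Mj, LE L Mi Mj ->
         [/\ LM L Mi, LM L Mj, Llab L Mi Mj \in LP L,
             Llab L Mi Mj \in mP Mi &
             Mj = absM [set Llab L Mi Mj] Mi])].

Definition prop_conserving (L : lattice) : Prop :=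
  forall M, LM L M -> forall p, p \in LP L -> p \notin mP M ->
    exists M', LE L M' M /\ Llab L M' M = p.

(* gamma_p(M): the M' with (M',M) in 𝔼 labelled p (M itself if none exists) *)
Definition gamma1 (L : lattice) (p : T) (M : model) : model :=
  epsilon (inhabits M)
    (fun M' => (LE L M' M /\ Llab L M' M = p) \/
               (~ (exists M'', LE L M'' M /\ Llab L M'' M = p) /\ M' = M)).

Definition gammaE (L : lattice) (E : {set T}) (M : model) : model :=
  foldr (gamma1 L) M (enum E).

Definition explanation (L : lattice) (MH : model) (F : seq (seq A))
  (E : {set T}) : Prop :=
  E \subset LP L /\
  forall pi, List.In pi F -> ~ valid (gammaE L E MH) pi.

End Models.

(* Every model of the lattice abstracts the concrete model M#, and the
   concretization gamma_p adds exactly the proposition p (by proposition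
   conservation, p is already present when no edge is labelled p).  Hence
   gamma_E(M) has propositions E ∪ P(M), so from P(M_i) ⊆ P(M_H) we get that
   gamma_E(M_i) abstracts M# at least as coarsely as gamma_E(M_H).  Coarsening an
   abstraction preserves plan validity, so a foil valid in gamma_E(M_H) would be
   valid in gamma_E(M_i). *)

From mathcomp Require Import all_boot.
From Stdlib Require Import Classical ClassicalEpsilon.

Set Implicit Arguments.
Unset Strict Implicit.
Unset Printing Implicit Defensive.

Section Abstraction.
Variables (T : finType) (A : Type).

Definition wf_model (M : model T A) : Prop :=
  [/\ forall s, s \in mS M -> s \subset mP M,
      mI M \in mS M,
      mG M \subset mP M &
      forall s a s', mtrans M s a s' -> s \in mS M /\ s' \in mS M].

Lemma strips_model_wf (M : model T A) : strips_model M -> wf_model M.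
Proof.
move=> [prec [eadd [edel [statesP initS goalP applyS transE]]]].
split=> // s a s' /transE [sS ->]; split=> //; exact: applyS.
Qed.

Variables (M : model T A) (L1 L2 : {set T}).
Hypothesis wfM : wf_model M.
Hypothesis coarser : mP (absM L2 M) \subset mP (absM L1 M).

Lemma coarsen_notin x : x \in mP M -> x \notin L2 -> x \notin L1.
Proof.
move=> xP xnL2; have /subsetP /(_ x) := coarser.
by rewrite /= !inE xP xnL2 !andbT; apply.
Qed.

Lemma setD_absM_coarsen (s : {set T}) :
  s \subset mP M -> s :\: L1 :\: L2 = s :\: L2.
Proof.
move=> /subsetP sP; apply/setP => x; rewrite !inE.
have [xL2 | xnL2] //= := boolP (x \in L2).
by have [/sP xP | ] := boolP (x \in s); rewrite ?andbF ?andbT ?coarsen_notin.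
Qed.

Lemma reach_absM_coarsen u pi t :
  reach (absM L1 M) u pi t -> reach (absM L2 M) (u :\: L2) pi (t :\: L2).
Proof.
have [statesP _ _ transS] := wfM.
elim=> {u pi t} [s | _ a _ pi t [s1 [s2 [tr12 -> ->]]] _ IH]; first exact: reach_nil.
have [s1S s2S] := transS _ _ _ tr12.
apply: reach_cons IH; exists s1, s2.
by rewrite !setD_absM_coarsen //; exact: statesP.
Qed.

Lemma valid_absM_coarsen pi : valid (absM L1 M) pi -> valid (absM L2 M) pi.
Proof.
have [statesP initS goalP _] := wfM.
move=> [t [reach_t goal_t]]; exists (t :\: L2); split.
  by rewrite /= -(setD_absM_coarsen (statesP _ initS)); exact: reach_absM_coarsen.
apply/subsetP => x; rewrite !inE => /andP [xnL2 xG]; rewrite xnL2.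
apply: (subsetP goal_t); rewrite !inE xG coarsen_notin //; exact: (subsetP goalP).
Qed.

End Abstraction.

Section Concretization.
Variables (T : finType) (A : Type) (L : lattice T A).

Lemma gamma1P p (M : model T A) :
  (LE L (gamma1 L p M) M /\ Llab L (gamma1 L p M) M = p) \/
  (~ (exists M', LE L M' M /\ Llab L M' M = p) /\ gamma1 L p M = M).
Proof.
rewrite /gamma1; set P := fun M' => _ \/ _; apply: (epsilon_spec _ P).
have [[M' edgeM'] | noedge] := classic (exists M', LE L M' M /\ Llab L M' M = p).
  by exists M'; left.
by exists M; right.
Qed.

Variable Msharp : model T A.
Hypothesis latticeL : is_lattice L Msharp.

Lemma lattice_gamma1 p M : LM L M -> LM L (gamma1 L p M).
Proof.
have [_ _ edges] := latticeL.
by case: (gamma1P p M) => [[/edges []] | [_ ->]].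
Qed.

Lemma lattice_foldr_gamma1 (l : seq T) M :
  LM L M -> LM L (foldr (gamma1 L) M l).
Proof. by elim: l => //= p l IH /IH; exact: lattice_gamma1. Qed.

Lemma lattice_gammaE (E : {set T}) M : LM L M -> LM L (gammaE L E M).
Proof. exact: lattice_foldr_gamma1. Qed.

Hypothesis conservingL : prop_conserving L.

Lemma mP_gamma1 p M : LM L M -> p \in LP L -> mP (gamma1 L p M) = p |: mP M.
Proof.
have [_ _ edges] := latticeL.
move=> LMM pLP; move: (gamma1P p M).
move: (gamma1 L p M) => M' [[edge lab] | [noedge ->]].
  have [_ _ _ pP defM] := edges _ _ edge.
  by rewrite [in RHS]defM /= lab setD1K // -lab.
have pM : p \in mP M by apply/negPn/negP => /(conservingL LMM pLP) /noedge.
by rewrite (setUidPr _) // sub1set.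
Qed.

Lemma mP_gammaE (E : {set T}) M :
  LM L M -> E \subset LP L -> mP (gammaE L E M) = E :|: mP M.
Proof.
move=> LMM /subsetP ELP; rewrite /gammaE -[E in RHS]set_enum.
have: {subset enum E <= LP L} by move=> p; rewrite mem_enum; exact: ELP.
elim: (enum E) => [_ | p l IH /= lLP]; first by rewrite set_nil set0U.
have lLP' : {subset l <= LP L} by move=> q lq; apply: lLP; rewrite inE lq orbT.
rewrite mP_gamma1 ?IH // ?set_cons ?setUA //; last exact/lLP/mem_head.
exact: lattice_foldr_gamma1.
Qed.

End Concretization.

Theorem proposition1 (T : finType) (A : Type) (L : lattice T A)
  (Msharp : model T A) (F : seq (seq A)) (MH Mi : model T A) (E : {set T}) :
  strips_model Msharp ->
  is_lattice L Msharp ->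
  prop_conserving L ->
  LM L MH -> LM L Mi ->
  abstracts MH Mi ->
  explanation L Mi F E ->
  explanation L MH F E.
Proof.
move=> stripsM latticeL conservingL LMH LMi [Lam defMi] [ELP noValidI].
split=> // pi /noValidI noValid validH; apply: noValid.
have [_ abstractsM _] := latticeL.
have [LamH defH] := abstractsM _ (lattice_gammaE latticeL E LMH).
have [LamI defI] := abstractsM _ (lattice_gammaE latticeL E LMi).
have coarser : mP (absM LamI Msharp) \subset mP (absM LamH Msharp).
  rewrite -defH -defI !(mP_gammaE latticeL conservingL) // defMi.
  exact/setUS/subsetDl.
rewrite defI; rewrite defH in validH.
exact: valid_absM_coarsen (strips_model_wf stripsM) coarser _ validH.
Qed.
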